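(* Let $\mathbf{L}$ be a real symmetric $N\times N$ matrix with $\|\mathbf{L}\|\le\varrho$, orthonormal eigenvectors $\boldsymbol{\phi}_n$ and eigenvalues $\lambda_n$, $n=1,\dots,N$. Let $K\ge1$, $\psi^{(k)}\neq0,\varphi^{(k)}\in\mathbb{C}$ for $k=1,\dots,K$, $c\in\mathbb{C}$, and $\mathbf{x}\in\mathbb{C}^N$ fixed. Consider the parallel ARMA$_K$ recursion $$\mathbf{y}^{(k)}_{t+1}=\psi^{(k)}\mathbf{L}\mathbf{y}^{(k)}_t+\varphi^{(k)}\mathbf{x}\ (k=1,\dots,K),\qquad \mathbf{z}_{t+1}=\sum_{k=1}^K\mathbf{y}^{(k)}_{t+1}+c\,\mathbf{x},$$ with arbitrary initial conditions $\mathbf{y}^{(k)}_0$. Let $r_k=-\varphi^{(k)}/\psi^{(k)}$ and $p_k=1/\psi^{(k)}$. Then the frequency response of this recursion is $$H(\lambda)=c+\sum_{k=1}^K\frac{r_k}{\lambda-p_k}\qquad\text{subject to } |p_k|>\varrho \text{ for all } k,$$ i.e. under these conditions $\mathbf{z}_t$ converges linearly, irrespective of the initial conditions and of $\mathbf{L}$, to $\sum_{n=1}^N H(\lambda_n)\langle\mathbf{x},\boldsymbol{\phi}_n\rangle\boldsymbol{\phi}_n$.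
   Context: $\mathbf{L}$ is a symmetric local graph representation matrix (e.g. a possibly shifted graph Laplacian) of an undirected graph; all considered $\mathbf{L}$ have eigenvalues in $[\lambda_{\min},\lambda_{\max}]$ and $\varrho=\max\{|\lambda_{\min}|,|\lambda_{\max}|\}$. Linear convergence means convergence exponentially fast in $t$. *)

From HB Require Import structures.
From mathcomp Require Import all_boot all_order all_algebra.
From mathcomp Require Import complex.
Set Implicit Arguments. Unset Strict Implicit. Unset Printing Implicit Defensive.
Import Order.TTheory GRing.Theory Num.Theory.
Local Open Scope ring_scope.

Section Arma.
Variables (R : rcfType) (N : nat).

Definition cplx_mx m n (A : 'M[R]_(m, n)) : 'M[R[i]]_(m, n) :=
  map_mx (fun a => a%:C%C) A.

Fixpoint arma_branch (L : 'M[R]_N) (psi varphi : R[i]) (x y0 : 'cV[R[i]]_N)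
    (t : nat) : 'cV[R[i]]_N :=
  match t with
  | 0 => y0
  | t'.+1 => psi *: (cplx_mx L *m arma_branch L psi varphi x y0 t') + varphi *: x
  end.

(* Output of the parallel ARMA_K recursion: z_t = sum_k y^(k)_t + c x
   (for t >= 1 this is exactly the recursion z_{t+1} = sum_k y^(k)_{t+1} + c x;
    the value at t = 0 is irrelevant for convergence). *)
Definition arma_output (K : nat) (L : 'M[R]_N) (psi varphi : 'I_K -> R[i])
    (c : R[i]) (x : 'cV[R[i]]_N) (y0 : 'I_K -> 'cV[R[i]]_N) (t : nat)
    : 'cV[R[i]]_N :=
  \sum_(k < K) arma_branch L (psi k) (varphi k) x (y0 k) t + c *: x.

Definition arma_pole K (psi : 'I_K -> R[i]) k : R[i] := (psi k)^-1.
Definition arma_residue K (psi varphi : 'I_K -> R[i]) k : R[i] :=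
  - varphi k / psi k.
Definition freq_resp K (psi varphi : 'I_K -> R[i]) (c : R[i]) (lam : R[i])
    : R[i] :=
  c + \sum_(k < K) arma_residue psi varphi k / (lam - arma_pole psi k).

Definition cinner (x v : 'cV[R[i]]_N) : R[i] :=
  \sum_(j < N) x j 0 * (v j 0)^*%C.

Definition graph_filter_target K (psi varphi : 'I_K -> R[i]) (c : R[i])
    (lam : 'I_N -> R) (phi : 'I_N -> 'cV[R]_N) (x : 'cV[R[i]]_N)
    : 'cV[R[i]]_N :=
  \sum_(n < N) (freq_resp psi varphi c (lam n)%:C%C * cinner x (cplx_mx (phi n)))
                 *: cplx_mx (phi n).

Definition converges_linearly (u : nat -> 'cV[R[i]]_N) (l : 'cV[R[i]]_N) :=
  exists (C q : R), 0 <= q /\ q < 1 /\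
    forall t (j : 'I_N), Normc.normc (u t j 0 - l j 0) <= C * q ^+ t.

End Arma.

From HB Require Import structures.
From mathcomp Require Import all_boot all_order all_algebra.
From mathcomp Require Import complex.
From mathcomp Require Import ring.
Set Implicit Arguments. Unset Strict Implicit. Unset Printing Implicit Defensive.
Import Order.TTheory GRing.Theory Num.Theory.
Local Open Scope ring_scope.

(* Expand everything in the orthonormal eigenbasis [phi n] of [L].  On the
   mode [n], branch [k] is the scalar recursion
   [y <- psi_k lam_n y + varphi_k <x, phi_n>], whose fixed point is
   [r_k / (lam_n - p_k) <x, phi_n>] and whose error is multiplied by
   [psi_k lam_n] at each step.  Summing the fixed points over [k] and adding
   [c x] gives the target, and [|psi_k lam_n| <= |psi_k| rho < 1] because
   [|p_k| > rho]: the error decays geometrically. *)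

Section Complexification.
Variable R : rcfType.

Lemma normcE (z : R[i]) : `|z| = (Normc.normc z)%:C%C.
Proof. by case: z. Qed.

Lemma normc_ge0 (z : R[i]) : 0 <= Normc.normc z.
Proof. by rewrite -lecR -normcE normr_ge0. Qed.

Lemma normc_real (a : R) : Normc.normc a%:C%C = `|a|.
Proof. by rewrite /= expr0n /= addr0 sqrtr_sqr. Qed.

Lemma real_neq_of_normc_gt (a rho : R) (z : R[i]) :
  `|a| <= rho -> rho < Normc.normc z -> a%:C%C != z.
Proof. by move=> ha; apply: contraTneq => <-; rewrite normc_real -leNgt. Qed.

Lemma normc_mul_lt1 (z : R[i]) (rho : R) :
  z != 0 -> rho < Normc.normc z^-1 -> Normc.normc z * rho < 1.
Proof.
move=> z0; rewrite Normc.normcV => hz.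
have z_gt0 : 0 < Normc.normc z.
  by rewrite lt_def normc_ge0 andbT; apply: contra z0 => /eqP/Normc.eq0_normc ->.
by rewrite mulrC -ltr_pdivlMr // mul1r.
Qed.

Lemma normc_sum_expM (I : finType) (b w : I -> R[i]) (q : R) t :
    (forall i, Normc.normc (b i) <= q) ->
  Normc.normc (\sum_i b i ^+ t * w i) <= q ^+ t * \sum_i Normc.normc (w i).
Proof.
move=> hb; rewrite -lecR -normcE mulr_sumr rmorph_sum.
apply: (le_trans (ler_norm_sum _ _ _)); apply: ler_sum => i _.
rewrite normrM normrX !normcE -rmorphXn -rmorphM lecR.
rewrite ler_wpM2r ?normc_ge0 // lerXn2r ?nnegrE ?normc_ge0 //.
exact: le_trans (normc_ge0 _) (hb i).
Qed.

Lemma cplx_mxM m n p (A : 'M[R]_(m, n)) (B : 'M[R]_(n, p)) :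
  cplx_mx (A *m B) = cplx_mx A *m cplx_mx B.
Proof.
apply/matrixP => i j; rewrite !mxE rmorph_sum; apply: eq_bigr => k _.
by rewrite !mxE rmorphM.
Qed.

Lemma cplx_mxZ m n (a : R) (A : 'M[R]_(m, n)) :
  cplx_mx (a *: A) = a%:C%C *: cplx_mx A.
Proof. by apply/matrixP => i j; rewrite !mxE rmorphM. Qed.

Lemma cplx_mxT m n (A : 'M[R]_(m, n)) : cplx_mx A^T = (cplx_mx A)^T.
Proof. by apply/matrixP => i j; rewrite !mxE. Qed.

Variable N : nat.

Lemma cinnerE (u : 'cV[R[i]]_N) (w : 'cV[R]_N) :
  cinner u (cplx_mx w) = ((cplx_mx w)^T *m u) 0 0.
Proof.
by rewrite /cinner mxE; apply: eq_bigr => j _; rewrite !mxE conjc_real mulrC.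
Qed.

Lemma cinnerZ (a : R[i]) (u : 'cV[R[i]]_N) (w : 'cV[R]_N) :
  cinner (a *: u) (cplx_mx w) = a * cinner u (cplx_mx w).
Proof. by rewrite !cinnerE -scalemxAr mxE. Qed.

End Complexification.

Section Spectral.
Variables (R : rcfType) (N : nat) (L : 'M[R]_N).
Variables (lam : 'I_N -> R) (phi : 'I_N -> 'cV[R]_N).
Hypothesis horth : forall n m : 'I_N, ((phi n)^T *m phi m) 0 0 = (n == m)%:R.
Hypothesis hsym : L^T = L.
Hypothesis heig : forall n : 'I_N, L *m phi n = lam n *: phi n.

Local Notation Phi n := (cplx_mx (phi n)).

(* For the square matrix [P] of eigenvectors, [P^T P = 1] forces [P P^T = 1]. *)
Lemma orthonormal_rows (i j : 'I_N) :
  \sum_n phi n i 0 * phi n j 0 = (i == j)%:R.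
Proof.
pose P : 'M[R]_N := \matrix_(i, n) phi n i 0.
have /mulmx1C/matrixP/(_ i j) : P^T *m P = 1%:M.
  apply/matrixP => a b; rewrite !mxE -horth mxE.
  by apply: eq_bigr => k _; rewrite !mxE.
by rewrite !mxE => <-; apply: eq_bigr => n _; rewrite !mxE.
Qed.

Lemma eigen_expansion (v : 'cV[R[i]]_N) :
  v = \sum_n cinner v (Phi n) *: Phi n.
Proof.
apply/matrixP => j z; rewrite (ord1 z) summxE.
under eq_bigr => n _ do rewrite mxE /cinner mulr_suml.
rewrite exchange_big /= (eq_bigr (fun i => v i 0 * ((i == j)%:R)%:C%C)).
  rewrite (bigD1 j) //= eqxx mulr1 big1 ?addr0 // => i /negbTE ->.
  by rewrite mulr0.
move=> i _; rewrite -orthonormal_rows rmorph_sum mulr_sumr.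
by apply: eq_bigr => n _; rewrite !mxE conjc_real rmorphM mulrA.
Qed.

Lemma cplx_eigenvector n : cplx_mx L *m Phi n = (lam n)%:C%C *: Phi n.
Proof. by rewrite -cplx_mxM heig cplx_mxZ. Qed.

Lemma cinner_mulmx (v : 'cV[R[i]]_N) n :
  cinner (cplx_mx L *m v) (Phi n) = (lam n)%:C%C * cinner v (Phi n).
Proof.
rewrite !cinnerE mulmxA -cplx_mxT -cplx_mxM -{1}hsym -trmx_mul.
by rewrite heig linearZ /= cplx_mxZ -scalemxAl mxE.
Qed.

Section Branch.
Variables (psi varphi : R[i]) (x : 'cV[R[i]]_N).
Hypothesis hpsi : psi != 0.
Hypothesis hsep : forall n, (lam n)%:C%C != psi^-1.

Definition branch_fixpoint : 'cV[R[i]]_N :=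
  \sum_n (- varphi / psi / ((lam n)%:C%C - psi^-1) * cinner x (Phi n)) *: Phi n.

Lemma branch_fixpointP :
  branch_fixpoint = psi *: (cplx_mx L *m branch_fixpoint) + varphi *: x.
Proof.
rewrite [in RHS](eigen_expansion x) /branch_fixpoint mulmx_sumr !scaler_sumr.
rewrite -big_split; apply: eq_bigr => n _ /=.
rewrite -scalemxAr cplx_eigenvector !scalerA -scalerDl; congr (_ *: _).
have hden : (lam n)%:C%C * psi - 1 != 0.
  by rewrite -(mulVf hpsi) -mulrBl mulf_neq0 ?subr_eq0 ?hsep.
by field; rewrite hpsi /=.
Qed.

Lemma cinner_branch_error (y0 : 'cV[R[i]]_N) t n :
  cinner (arma_branch L psi varphi x y0 t - branch_fixpoint) (Phi n)
  = (psi * (lam n)%:C%C) ^+ t * cinner (y0 - branch_fixpoint) (Phi n).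
Proof.
elim: t => [|t IH]; first by rewrite expr0 mul1r.
have -> : arma_branch L psi varphi x y0 t.+1 - branch_fixpoint
    = psi *: (cplx_mx L *m (arma_branch L psi varphi x y0 t - branch_fixpoint)).
  by rewrite /= [X in _ - X]branch_fixpointP opprD addrACA subrr addr0 mulmxBr scalerBr.
by rewrite cinnerZ cinner_mulmx IH exprS mulrA mulrA.
Qed.

Lemma branch_error_expansion (y0 : 'cV[R[i]]_N) t :
  arma_branch L psi varphi x y0 t - branch_fixpoint
  = \sum_n ((psi * (lam n)%:C%C) ^+ t * cinner (y0 - branch_fixpoint) (Phi n))
           *: Phi n.
Proof.
by rewrite [LHS]eigen_expansion; apply: eq_bigr => n _; rewrite cinner_branch_error.
Qed.

End Branch.

Lemma graph_filter_target_branches K (psi varphi : 'I_K -> R[i]) c x :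
  graph_filter_target psi varphi c lam phi x
  = c *: x + \sum_k branch_fixpoint (psi k) (varphi k) x.
Proof.
rewrite /graph_filter_target /freq_resp.
under eq_bigr => n _ do rewrite mulrDl scalerDl.
rewrite big_split /=; congr (_ + _).
  by rewrite [in RHS](eigen_expansion x) scaler_sumr; apply: eq_bigr => n _; rewrite scalerA.
rewrite exchange_big; apply: eq_bigr => n _ /=.
by rewrite mulr_suml scaler_suml.
Qed.

Lemma arma_output_error K (psi varphi : 'I_K -> R[i]) c x y0 t :
    (forall k, psi k != 0) -> (forall k n, (lam n)%:C%C != (psi k)^-1) ->
  arma_output L psi varphi c x y0 t - graph_filter_target psi varphi c lam phi x
  = \sum_k \sum_n ((psi k * (lam n)%:C%C) ^+ t
        * cinner (y0 k - branch_fixpoint (psi k) (varphi k) x) (Phi n)) *: Phi n.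
Proof.
move=> hpsi hsep; rewrite graph_filter_target_branches /arma_output.
rewrite [c *: x + _]addrC opprD addrACA subrr addr0 -sumrB.
by apply: eq_bigr => k _; rewrite branch_error_expansion.
Qed.

End Spectral.

Theorem theorem2 (R : rcfType) (N : nat) (L : 'M[R]_N) (rho : R)
    (lam : 'I_N -> R) (phi : 'I_N -> 'cV[R]_N)
    (hsym : L^T = L)
    (horth : forall n m : 'I_N, ((phi n)^T *m phi m) 0 0 = (n == m)%:R)
    (heig : forall n : 'I_N, L *m phi n = lam n *: phi n)
    (hnorm : forall n : 'I_N, `|lam n| <= rho)
    (K : nat) (hK : (1 <= K)%N) (psi varphi : 'I_K -> R[i]) (c : R[i])
    (x : 'cV[R[i]]_N)
    (hpsi : forall k, psi k != 0)
    (hpole : forall k, rho < Normc.normc (arma_pole psi k)) :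
  forall y0 : 'I_K -> 'cV[R[i]]_N,
    converges_linearly (arma_output L psi varphi c x y0)
      (graph_filter_target psi varphi c lam phi x).
Proof.
move=> y0.
pose ys k := branch_fixpoint lam phi (psi k) (varphi k) x.
pose mu k n := psi k * (lam n)%:C%C.
pose w j k n := cinner (y0 k - ys k) (cplx_mx (phi n)) * (phi n j 0)%:C%C.
pose q : R := \big[Num.max/0]_(k < K) (Normc.normc (psi k) * rho).
have hsep k n : (lam n)%:C%C != (psi k)^-1.
  exact: real_neq_of_normc_gt (hnorm n) (hpole k).
have hmu (p : 'I_K * 'I_N) : Normc.normc (mu p.1 p.2) <= q.
  rewrite Normc.normcM normc_real (le_trans _ (le_bigmax _ _ p.1)) //.
  by rewrite ler_wpM2l ?normc_ge0.
have herr t j : (arma_output L psi varphi c x y0 t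
    - graph_filter_target psi varphi c lam phi x) j 0 = \sum_p mu p.1 p.2 ^+ t * w j p.1 p.2.
  rewrite (@arma_output_error _ _ L lam phi horth hsym heig _ _ varphi c x y0 t hpsi hsep).
  rewrite summxE -(pair_bigA _ (fun k n => mu k n ^+ t * w j k n)) /=.
  by apply: eq_bigr => k _; rewrite summxE; apply: eq_bigr => n _; rewrite 2!mxE mulrA.
exists (\sum_j \sum_p Normc.normc (w j p.1 p.2)), q.
split; first exact: bigmax_ge_id.
split=> [|t j].
  by apply: bigmax_lt => [|k _]; [exact: ltr01 | exact: normc_mul_lt1 (hpsi k) (hpole k)].
have := herr t j; rewrite !mxE => ->; rewrite mulrC.
apply: (le_trans (normc_sum_expM _ _ hmu)).
rewrite ler_wpM2l ?exprn_ge0 ?bigmax_ge_id // (bigD1 j) //= lerDl.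
by apply: sumr_ge0 => j' _; apply: sumr_ge0 => p _; exact: normc_ge0.
Qed.
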